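(* Let $k\ge2$ be an even integer. Then the polynomial $\sum_{i=0}^ka^ib^{k-i}-\tfrac12(a^k+b^k)\in\mathbb R[a,b]$ is a sum of squares of polynomials. *)

From HB Require Import structures.
From mathcomp Require Import all_boot all_order all_algebra.
From mathcomp Require Import reals.
From mathcomp Require Import mpoly.
Set Implicit Arguments. Unset Strict Implicit. Unset Printing Implicit Defensive.
Import GRing.Theory Num.Theory.
Local Open Scope ring_scope.

Definition binom_sum_poly (R : realType) (k : nat) : {mpoly R[2]} :=
  \sum_(i < k.+1) ('X_0 ^+ i * 'X_1 ^+ (k - i))
  - 2%:R^-1 *: ('X_0 ^+ k + 'X_1 ^+ k).

Definition is_sos (R : realType) (p : {mpoly R[2]}) : Prop :=
  exists s : seq {mpoly R[2]}, p = \sum_(q <- s) q ^+ 2.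

From HB Require Import structures.
From mathcomp Require Import all_boot all_order all_algebra.
From mathcomp Require Import reals.
From mathcomp Require Import mpoly.
From mathcomp Require Import ring zify.
Set Implicit Arguments. Unset Strict Implicit. Unset Printing Implicit Defensive.
Import GRing.Theory Num.Theory.
Local Open Scope ring_scope.

(* With h_k(a,b) = sum_(i <= k) a^i b^(k-i) and k = 2m, the identity
   2 h_k = a^k + b^k + (a + b)^2 * sum_(j < m) (a^j b^(m-1-j))^2
   holds in any commutative ring: (a^2 + b^2) times the square sum gives
   a^k + b^k plus twice the terms of h_k with even exponents, and 2ab times
   it gives twice those with odd exponents.  So the polynomial is one half of
   (a + b)^2 times a sum of squares. *)

Section CompleteHomogeneous.
Variables (R : comPzRingType) (x y : R).

Definition homsum (n : nat) : R := \sum_(i < n.+1) x ^+ i * y ^+ (n - i).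

Definition even_sqr_sum (m : nat) : R := \sum_(j < m) (x ^+ j * y ^+ (m.-1 - j)) ^+ 2.

Lemma homsum0 : homsum 0 = 1.
Proof. by rewrite /homsum big_ord1 mulr1. Qed.

Lemma homsumSS (n : nat) :
  homsum n.+2 = x ^+ n.+2 + x ^+ n.+1 * y + y ^+ 2 * homsum n.
Proof.
rewrite /homsum [LHS]big_ord_recr [in LHS]big_ord_recr /= subnn subSnn mulr1.
have -> : \sum_(i < n.+1) x ^+ i * y ^+ (n.+2 - i)
          = y ^+ 2 * \sum_(i < n.+1) x ^+ i * y ^+ (n - i).
  rewrite mulr_sumr; apply: eq_bigr => i _.
  have -> : (n.+2 - i = (n - i) + 2)%N by have := ltn_ord i; lia.
  by rewrite exprD; ring.
ring.
Qed.

Lemma even_sqr_sum0 : even_sqr_sum 0 = 0.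
Proof. exact: big_ord0. Qed.

Lemma even_sqr_sumS (m : nat) :
  even_sqr_sum m.+1 = y ^+ 2 * even_sqr_sum m + (x ^+ m) ^+ 2.
Proof.
rewrite /even_sqr_sum big_ord_recr /= subnn mulr1 mulr_sumr.
congr (_ + _); apply: eq_bigr => i _.
have -> : (m - i = (m.-1 - i) + 1)%N by have := ltn_ord i; lia.
by rewrite exprD; ring.
Qed.

Lemma homsum_even (m : nat) :
  2%:R * homsum (2 * m) = x ^+ (2 * m) + y ^+ (2 * m) + (x + y) ^+ 2 * even_sqr_sum m.
Proof.
elim: m => [|m IH]; first by rewrite homsum0 even_sqr_sum0; ring.
have -> : (2 * m.+1 = (2 * m).+2)%N by lia.
rewrite homsumSS even_sqr_sumS.
have -> : 2%:R * (x ^+ (2 * m).+2 + x ^+ (2 * m).+1 * y + y ^+ 2 * homsum (2 * m))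
          = 2%:R * (x ^+ (2 * m).+2 + x ^+ (2 * m).+1 * y) + y ^+ 2 * (2%:R * homsum (2 * m)).
  by ring.
have x2m : x ^+ (2 * m) = (x ^+ m) ^+ 2 by rewrite -exprM mulnC.
rewrite IH !exprS x2m.
ring.
Qed.

End CompleteHomogeneous.

Lemma scaler_sum_sqr (R : rcfType) (A : algType R) (I : Type) (r : seq I)
    (F : I -> A) (a : R) :
  0 <= a -> a *: \sum_(i <- r) F i ^+ 2 = \sum_(i <- r) (Num.sqrt a *: F i) ^+ 2.
Proof.
move=> a_ge0; rewrite scaler_sumr; apply: eq_bigr => i _.
by rewrite exprZn sqr_sqrtr.
Qed.

Lemma binom_sum_poly_even (R : realType) (m : nat) :
  binom_sum_poly R (2 * m)
  = 2^-1 *: (('X_0 + 'X_1) ^+ 2 * even_sqr_sum 'X_0 'X_1 m).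
Proof.
rewrite /binom_sum_poly -[\sum_(i < _) _]/(homsum 'X_0 'X_1 (2 * m)).
have halve (p : {mpoly R[2]}) : p = 2^-1 *: (2%:R * p).
  by rewrite mulr_natl -scaler_nat scalerA mulVf ?pnatr_eq0 ?scale1r.
rewrite [homsum _ _ _]halve homsum_even -scalerBr.
by congr (_ *: _); ring.
Qed.

Theorem mainTheorem16 (R : realType) (k : nat) :
  (2 <= k)%N -> ~~ odd k -> is_sos (binom_sum_poly R k).
Proof.
move=> _ k_even.
have -> : k = (2 * k./2)%N by rewrite -[LHS]odd_double_half (negbTE k_even) -mul2n.
exists [seq Num.sqrt 2^-1 *: (('X_0 + 'X_1) * ('X_0 ^+ j * 'X_1 ^+ (k./2.-1 - j)))
          | j : 'I_k./2].
rewrite big_map big_enum /= -scaler_sum_sqr ?invr_ge0 ?ler0n //.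
under eq_bigr do rewrite exprMn.
by rewrite binom_sum_poly_even /even_sqr_sum mulr_sumr.
Qed.
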